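(* Let $k$ be a nonnegative integer such that some fair set $S \in \mathcal{C}$ has $|S| = k$. Define $\tilde{\mathcal{C}}_k = \{S \subseteq V : \text{there exists } S' \in \mathcal{C} \text{ with } |S'| \le k \text{ and } S \subseteq S'\}$. Then $\tilde{\mathcal{C}}_k$ is a matroid, every fair set $S \in \mathcal{C}$ with $|S| = k$ is a base of $\tilde{\mathcal{C}}_k$, and conversely every base of $\tilde{\mathcal{C}}_k$ is a fair set (of size $k$).
   Context: $V$ is a finite ground set partitioned into disjoint color groups $V_1,\dots,V_C$, with integer bounds $0 \le \ell_c \le u_c$ for each $c$. The fair sets are $\mathcal{C} = \{S \subseteq V : \ell_c \le |S \cap V_c| \le u_c\ \forall c \in [C]\}$. A base of a matroid is an inclusion-maximal independent set. *)

From mathcomp Require Import all_boot all_order.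
Set Implicit Arguments. Unset Strict Implicit. Unset Printing Implicit Defensive.

(* Ground set V = the finite type T. The partition V_1..V_C is given by a
   colouring col : T -> 'I_C (V_c = [set x | col x == c]). *)

Definition color_group (T : finType) (C : nat) (col : T -> 'I_C) (c : 'I_C)
  : {set T} := [set x | col x == c].

Definition fair (T : finType) (C : nat) (col : T -> 'I_C) (l u : 'I_C -> nat)
  (S : {set T}) : Prop :=
  forall c : 'I_C, l c <= #|S :&: color_group col c| <= u c.

Definition is_matroid (T : finType) (I : {set T} -> Prop) : Prop :=
  [/\ I set0,
      (forall A B : {set T}, B \subset A -> I A -> I B) &
      (forall A B : {set T}, I A -> I B -> #|A| < #|B| ->
          exists2 x, x \in B :\: A & I (x |: A))].

Definition is_base (T : finType) (I : {set T} -> Prop) (B : {set T}) : Prop :=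
  I B /\ (forall A : {set T}, I A -> B \subset A -> A = B).

Definition trunc_fair (T : finType) (C : nat) (col : T -> 'I_C)
  (l u : 'I_C -> nat) (k : nat) (S : {set T}) : Prop :=
  exists S' : {set T}, [/\ fair col l u S', #|S'| <= k & S \subset S'].

From mathcomp Require Import all_boot all_order zify.

Set Implicit Arguments.
Unset Strict Implicit.
Unset Printing Implicit Defensive.

(* Writing a_c := |S ∩ V_c|, a set S lies in C~_k exactly when a_c <= u_c for
   every colour and its weight w(S) := sum_c max(a_c, l_c) is at most k: the
   weight is the size of the smallest fair superset of S, which is obtained by
   topping up every colour below its lower bound.  For the exchange axiom take
   |A| < |B|.  Adding an element x of B \ A of a colour c with a_c < b_c keeps
   the upper bounds, and raises w(A) by one only if a_c >= l_c.  If no such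
   addition is allowed, then w(A) = k and a_c >= l_c whenever a_c < b_c; in
   that case max(a_c, l_c) + b_c <= max(b_c, l_c) + a_c for every colour, and
   summing gives w(A) < w(B) <= k, a contradiction. *)

Section MatroidBase.
Variables (T : finType) (I : {set T} -> Prop).

Lemma matroid_base_card_max (A B : {set T}) :
  is_matroid I -> is_base I B -> I A -> #|A| <= #|B|.
Proof.
case=> _ _ exchange [IB maxB] IA; rewrite leqNgt; apply/negP=> ltBA.
have [x /setDP[_ xNB] IxB] := exchange B A IB IA ltBA.
have /setP/(_ x) := maxB _ IxB (subsetUr _ _).
by rewrite !inE eqxx (negbTE xNB).
Qed.

End MatroidBase.

Section ColorCounts.
Variables (T : finType) (C : nat) (col : T -> 'I_C).
Local Notation cnt S c := #|S :&: color_group col c|.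

Lemma card_color_sum (S : {set T}) : #|S| = \sum_(c < C) cnt S c.
Proof.
rewrite -sum1_card (partition_big col xpredT) //=.
by apply: eq_bigr => c _; rewrite -sum1_card; apply: eq_bigl => x; rewrite !inE.
Qed.

Lemma cnt_setU1 (S : {set T}) x c :
  x \notin S -> cnt (x |: S) c = (col x == c) + cnt S c.
Proof.
move=> xNS; rewrite (cardsD1 x) !inE eqxx /=; congr (_ + _).
by apply: eq_card => y; rewrite !inE; case: eqVneq => // ->; rewrite (negbTE xNS).
Qed.

Lemma cnt_subset (A B : {set T}) c : A \subset B -> cnt A c <= cnt B c.
Proof. by move=> sAB; apply/subset_leq_card/setSI. Qed.

Lemma cnt_ltP (A B : {set T}) c :
  cnt A c < cnt B c -> exists2 x, x \in B :\: A & col x = c.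
Proof.
move=> ltAB.
have /subsetPn[x] : ~~ (B :&: color_group col c \subset A :&: color_group col c).
  by apply: contraTN ltAB => /subset_leq_card; rewrite -leqNgt.
rewrite !inE => /andP[xB /eqP xc]; rewrite xc eqxx andbT => xNA.
by exists x; rewrite ?inE ?xNA.
Qed.

Lemma card_lt_cnt (A B : {set T}) : #|A| < #|B| -> exists c, cnt A c < cnt B c.
Proof.
move=> ltAB; apply/existsP; apply: contraTT ltAB; rewrite negb_exists -leqNgt.
by move=> /forallP leBA; rewrite !card_color_sum leq_sum // => c _; rewrite leqNgt.
Qed.

End ColorCounts.

Section FairWeight.
Variables (T : finType) (C : nat) (col : T -> 'I_C) (l u : 'I_C -> nat) (k : nat).
Hypothesis lower_le_color : forall c, l c <= #|color_group col c|.
Hypothesis lower_le_upper : forall c, l c <= u c.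
Local Notation cnt S c := #|S :&: color_group col c|.
Local Notation capped S := (forall c, cnt S c <= u c).

Definition fair_weight (S : {set T}) : nat := \sum_(c < C) maxn (cnt S c) (l c).

Lemma fair_weight_card (S : {set T}) :
  (forall c, l c <= cnt S c) -> fair_weight S = #|S|.
Proof.
by move=> lS; rewrite (card_color_sum col); apply: eq_bigr => c _; apply/maxn_idPl.
Qed.

Lemma fair_weight_subset (A B : {set T}) :
  A \subset B -> fair_weight A <= fair_weight B.
Proof. by move=> sAB; apply: leq_sum => c _; have := cnt_subset col c sAB; lia. Qed.

Lemma fair_weight_setU1 (S : {set T}) x :
  x \notin S -> fair_weight (x |: S) = fair_weight S + (l (col x) <= cnt S (col x)).
Proof.
move=> xNS; rewrite /fair_weight (bigD1 (col x)) //= [in RHS](bigD1 (col x)) //=.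
rewrite cnt_setU1 // eqxx -addnA [_ + (_ <= _)]addnC addnA; congr (_ + _).
  by case: leqP => /= ?; lia.
by apply: eq_bigr => c xc; rewrite cnt_setU1 // eq_sym (negbTE xc).
Qed.

Lemma capped_setU1 (S : {set T}) x :
  x \notin S -> capped S -> cnt S (col x) < u (col x) -> capped (x |: S).
Proof.
move=> xNS capS ltu c; rewrite cnt_setU1 //.
by case: eqVneq => [<-|_] //=; apply: capS.
Qed.

Lemma trunc_fair_subset (A B : {set T}) :
  A \subset B -> trunc_fair col l u k B -> trunc_fair col l u k A.
Proof. by move=> sAB [B' [fB' kB' sBB']]; exists B'; rewrite (subset_trans sAB). Qed.

Lemma trunc_fair_capped_weight (S : {set T}) :
  trunc_fair col l u k S -> capped S /\ fair_weight S <= k.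
Proof.
move=> [S' [fS' kS' sSS']]; split.
  by move=> c; apply: leq_trans (cnt_subset col c sSS') _; case/andP: (fS' c).
rewrite (leq_trans (fair_weight_subset sSS')) // fair_weight_card //.
by move=> c; case/andP: (fS' c).
Qed.

Lemma capped_weight_trunc_fair (S : {set T}) :
  capped S -> fair_weight S <= k -> trunc_fair col l u k S.
Proof.
have [n] := ubnP (#|T| - #|S|); elim: n S => // n IHn S ltSn capS wS.
have [lS | /forallPn[c]] := boolP [forall c, l c <= cnt S c].
  exists S; split=> //; last by rewrite -fair_weight_card //; apply/forallP.
  by move=> c; rewrite (forallP lS c) capS.
rewrite -ltnNge => ltSl.
have [|x /setDP[_ xNS] xc] := @cnt_ltP _ _ col S setT c.
  by rewrite setTI (leq_trans ltSl).
apply: (trunc_fair_subset (subsetUr [set x] S)); apply: IHn.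
- by move: ltSn; have := max_card (x |: S); rewrite cardsU1 xNS; lia.
- by apply: capped_setU1; rewrite // xc (leq_trans ltSl).
- by rewrite fair_weight_setU1 // xc (leqNgt (l c)) ltSl addn0.
Qed.

Lemma trunc_fairE (S : {set T}) :
  trunc_fair col l u k S <-> capped S /\ fair_weight S <= k.
Proof.
split; first exact: trunc_fair_capped_weight.
by case; apply: capped_weight_trunc_fair.
Qed.

Lemma fair_weight_exchange_ineq (A B : {set T}) :
  (forall c, cnt A c < cnt B c -> l c <= cnt A c) ->
  fair_weight A + #|B| <= fair_weight B + #|A|.
Proof.
move=> lA; rewrite !(card_color_sum col) -!big_split leq_sum // => c _ /=.
by case: (ltnP (cnt A c) (cnt B c)) => [/lA|]; lia.
Qed.

Lemma trunc_fair_exchange (A B : {set T}) :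
  trunc_fair col l u k A -> trunc_fair col l u k B -> #|A| < #|B| ->
  exists2 x, x \in B :\: A & trunc_fair col l u k (x |: A).
Proof.
move=> /trunc_fairE[capA wA] /trunc_fairE[capB wB] ltAB.
have [c0 ltc0] := card_lt_cnt col ltAB.
have [c /andP[ltc ext]] :
    exists c, (cnt A c < cnt B c) && ((cnt A c < l c) || (fair_weight A < k)).
  apply/existsP; apply: contraTT ltAB; rewrite negb_exists -leqNgt => /forallP noext.
  have {}noext c : cnt A c < cnt B c -> l c <= cnt A c /\ k <= fair_weight A.
    by move=> ltc; have := noext c; rewrite ltc /= negb_or -!leqNgt => /andP[].
  have [_ kwA] := noext c0 ltc0.
  by have := fair_weight_exchange_ineq (fun c ltc => (noext c ltc).1); lia.
have [x /setDP[xB xNA] xc] := cnt_ltP ltc.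
exists x; first by rewrite inE xNA.
apply/trunc_fairE; split.
  by apply: capped_setU1; rewrite // xc (leq_trans ltc).
rewrite fair_weight_setU1 // xc.
by case: (leqP (l c) (cnt A c)) ext => [_ /= |_ _]; rewrite ?addn1 ?addn0.
Qed.

Lemma trunc_fair_matroid :
  \sum_(c < C) l c <= k -> is_matroid (trunc_fair col l u k).
Proof.
move=> lk; split.
- apply/trunc_fairE; split=> [c|]; first by rewrite set0I cards0.
  by rewrite /fair_weight (eq_bigr l) // => c _; rewrite set0I cards0 max0n.
- by move=> A B; apply: trunc_fair_subset.
- exact: trunc_fair_exchange.
Qed.

Lemma fair_card_base (S : {set T}) :
  fair col l u S -> #|S| = k -> is_base (trunc_fair col l u k) S.
Proof.
move=> fS kS; split=> [|A [A' [_ kA' sAA']] sSA]; first by exists S; rewrite kS.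
have eSA' : S = A' by apply/eqP; rewrite eqEcard (subset_trans sSA sAA') kS.
by apply/eqP; rewrite eqEsubset sSA andbT eSA'.
Qed.

Lemma trunc_fair_base_fair (B : {set T}) :
  is_base (trunc_fair col l u k) B -> fair col l u B /\ #|B| <= k.
Proof.
case=> [[B' [fB' kB' sBB']] maxB].
by have <- : B' = B by apply: maxB => //; exists B'.
Qed.

End FairWeight.

Theorem lemma4p2 (T : finType) (C : nat) (col : T -> 'I_C)
  (l u : 'I_C -> nat) (k : nat) :
  (forall c : 'I_C, l c <= u c) ->
  (exists S : {set T}, fair col l u S /\ #|S| = k) ->
  [/\ is_matroid (trunc_fair col l u k),
      (forall S : {set T}, fair col l u S -> #|S| = k ->
          is_base (trunc_fair col l u k) S) &
      (forall B : {set T}, is_base (trunc_fair col l u k) B ->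
          fair col l u B /\ #|B| = k)].
Proof.
move=> lu [S0 [fS0 kS0]].
have lS0 c : l c <= #|S0 :&: color_group col c| by case/andP: (fS0 c).
have lV c : l c <= #|color_group col c|.
  exact: leq_trans (lS0 c) (subset_leq_card (subsetIr _ _)).
have M : is_matroid (trunc_fair col l u k).
  by apply: trunc_fair_matroid lV lu _; rewrite -kS0 (card_color_sum col) leq_sum.
split=> // [S fS kS | B baseB]; first exact: fair_card_base.
have [fB kB] := trunc_fair_base_fair baseB; split=> //.
apply/eqP; rewrite eqn_leq kB -{1}kS0.
by apply: matroid_base_card_max M baseB _; exists S0; rewrite kS0.
Qed.
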